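(* Let $(\mathfrak S_A,\mathfrak E_A,\epsilon^{\mathfrak S_A})$ and $(\mathfrak S_B,\mathfrak E_B,\epsilon^{\mathfrak S_B})$ be States/Effects Chu spaces, $\Phi\in\mathfrak S_A\widetilde{\otimes}\mathfrak S_B$ and $\mathfrak l_A\in\mathfrak E_A$ with $\Phi(\mathfrak l_A,\mathfrak Y_{\mathfrak E_B})=\bot$. Then for all $\mathfrak l_B,\mathfrak l'_B\in\mathfrak E_B$ with $\mathfrak l_B\sqcap\mathfrak l'_B=\bot_{\mathfrak E_B}$, $$(\Phi(\mathfrak l_A,\mathfrak l_B),\Phi(\mathfrak l_A,\mathfrak l'_B))\in\{(\bot,N),(N,\bot),(\bot,\bot)\}.$$
   Context: The boolean domain is $\mathfrak{B}=\{Y,N,\bot\}$, ordered by $u\le v$ iff $u=\bot$ or $u=v$; nonempty infima $\bigwedge$: $Y$ (resp. $N$) if all members are $Y$ (resp. $N$), else $\bot$. Product $\bullet$: $x\bullet Y=x$, $x\bullet N=N$, $\bot\bullet\bot=\bot$ (commutative); involution $\overline{\bot}=\bot$, $\overline{Y}=N$, $\overline{N}=Y$. A space of states is a poset $(\mathfrak S,\sqsubseteq)$ with bottom $\bot_{\mathfrak S}$ in which every nonempty subset has an infimum. The natural space of effects $\mathfrak E_{\mathfrak S}$ consists of formal symbols $\mathfrak l_{(\sigma,\sigma')}$ ($\sigma,\sigma'$ with no common upper bound), $\mathfrak l_{(\sigma,\cdot)}$, $\mathfrak l_{(\cdot,\sigma)}$, $\mathfrak l_{(\cdot,\cdot)}$,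 with evaluation $\epsilon_{\mathfrak l_{(a,b)}}(\sigma)=Y$ if $a\sqsubseteq\sigma$, $N$ if $b\sqsubseteq\sigma$, $\bot$ otherwise (''$\cdot\sqsubseteq\sigma$'' false), ordered by pointwise comparison of evaluations (nonempty infima exist and are pointwise). $\overline{\mathfrak l_{(a,b)}}=\mathfrak l_{(b,a)}$, $\mathfrak Y_{\mathfrak E}=\mathfrak l_{(\bot_{\mathfrak S},\cdot)}$, $\bot_{\mathfrak E}=\mathfrak l_{(\cdot,\cdot)}$ (constantly $\bot$). A States/Effects Chu space $(\mathfrak S,\mathfrak E,\epsilon)$: $\mathfrak E\subseteq\mathfrak E_{\mathfrak S}$ (induced order) such that (i) each $\sigma\ne\bot_{\mathfrak S}$ has some $\sigma'\ne\bot_{\mathfrak S}$ with $\mathfrak l_{(\sigma,\sigma')}\in\mathfrak E$; (ii) $\mathfrak E$ is closed under nonempty infima of $\mathfrak E_{\mathfrak S}$; (iii) closed under bar; (iv) contains $\mathfrak Y_{\mathfrak E},\bot_{\mathfrak E}$. The pure tensor $\sigma_A\widetilde{\otimes}\sigma_B$ is the map $\mathfrak E_A\times\mathfrak E_B\to\mathfrak B$, $(\mathfrak l_A,\mathfrak l_B)\mapsto\epsilon^{\mathfrak S_A}_{\mathfrak l_A}(\sigma_A)\bullet\epsilon^{\mathfrak S_B}_{\mathfrak l_B}(\sigma_B)$; the minimal tensor product $\mathfrak S_A\widetilde{\otimes}\mathfrak S_B$ is the set of pointwise infima of nonempty families of pure tensors. *)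

From Stdlib Require Import ClassicalEpsilon.

Inductive B3 : Type := BY | BN | Bbot.

Definition ble (u v : B3) : Prop := u = Bbot \/ u = v.

Definition bprod (x y : B3) : B3 :=
  match x, y with
  | BY, y => y
  | BN, _ => BN
  | Bbot, BY => Bbot
  | Bbot, BN => BN
  | Bbot, Bbot => Bbot
  end.

Definition is_inf_in {T : Type} (D : T -> Prop) (le : T -> T -> Prop)
  (P : T -> Prop) (m : T) : Prop :=
  D m /\ (forall x, P x -> le m x) /\
  (forall y, D y -> (forall x, P x -> le y x) -> le y m).

Record StateSpace : Type := {
  st :> Type;
  sle : st -> st -> Prop;
  sle_refl : forall x, sle x x;
  sle_trans : forall x y z, sle x y -> sle y z -> sle x z;
  sle_antisym : forall x y, sle x y -> sle y x -> x = y;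
  sbot : st;
  sbot_least : forall x, sle sbot x;
  sinf_exists : forall P : st -> Prop, (exists x, P x) ->
      exists m, is_inf_in (fun _ => True) sle P m
}.
Arguments sle {s}.
Arguments sbot {s}.

(** Formal effect symbols l_(a,b): a, b : option S (None = "."). *)
Definition Eff (S : StateSpace) : Type := (option S * option S)%type.

Definition valid_eff {S : StateSpace} (e : Eff S) : Prop :=
  forall a b, e = (Some a, Some b) -> ~ (exists c, sle a c /\ sle b c).

Definition holds {S : StateSpace} (o : option S) (s : S) : bool :=
  match o with
  | Some x => if excluded_middle_informative (sle x s) then true else false
  | None => false
  end.

Definition ev {S : StateSpace} (e : Eff S) (s : S) : B3 :=
  if holds (fst e) s then BY else if holds (snd e) s then BN else Bbot.

Definition effle {S : StateSpace} (e1 e2 : Eff S) : Prop :=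
  forall s, ble (ev e1 s) (ev e2 s).

Definition ebar {S : StateSpace} (e : Eff S) : Eff S := (snd e, fst e).
Definition effY (S : StateSpace) : Eff S := (Some sbot, None).
Definition effBot (S : StateSpace) : Eff S := (None, None).

Record Chu (S : StateSpace) : Type := {
  eff : Eff S -> Prop;
  eff_valid : forall e, eff e -> valid_eff e;
  chu_i : forall s : S, s <> sbot ->
      exists s' : S, s' <> sbot /\ eff (Some s, Some s');
  chu_ii : forall F : Eff S -> Prop, (forall e, F e -> eff e) ->
      (exists e, F e) ->
      forall m, is_inf_in valid_eff effle F m -> eff m;
  chu_iii : forall e, eff e -> eff (ebar e);
  chu_iv : eff (effY S) /\ eff (effBot S)
}.
Arguments eff {S} c _.

(** Phi belongs to the minimal tensor product: on E_A x E_B it is the pointwise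
    infimum of a nonempty family of pure tensors sa (x) sb, the family being
    given by the set P of pairs (sa, sb). *)
Definition in_min_tensor {SA SB : StateSpace} (CA : Chu SA) (CB : Chu SB)
  (Phi : Eff SA -> Eff SB -> B3) : Prop :=
  exists P : SA -> SB -> Prop, (exists sa sb, P sa sb) /\
    forall la lb, eff CA la -> eff CB lb ->
      is_inf_in (fun _ => True) ble
        (fun v => exists sa sb, P sa sb /\ v = bprod (ev la sa) (ev lb sb))
        (Phi la lb).

(* Since Phi(la, Y) = bot, the values ev la sa are neither
   all Y nor all N.  Hence Phi(la, lb) <> Y, and if Phi(la, lb) = Phi(la, lb') = N
   then at every pair with ev la sa <> N both lb and lb' evaluate to N at sb.
   This is impossible: the pointwise meet of lb and lb' is again an effect (it is
   built from least upper bounds of states), so lb /\ lb' = bot forces it to be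
   constantly bot. *)

From Stdlib Require Import Classical ClassicalEpsilon.

Definition bmeet (u v : B3) : B3 :=
  match u, v with
  | BY, BY => BY
  | BN, BN => BN
  | _, _ => Bbot
  end.

Lemma ble_bmeet_l u v : ble (bmeet u v) u.
Proof. destruct u, v; cbv; auto. Qed.

Lemma ble_bmeet_r u v : ble (bmeet u v) v.
Proof. destruct u, v; cbv; auto. Qed.

Lemma bmeet_greatest w u v : ble w u -> ble w v -> ble w (bmeet u v).
Proof. destruct w, u, v; cbv; intuition discriminate. Qed.

Lemma ble_nbot_eq u v : ble u v -> u <> Bbot -> u = v.
Proof. intros [-> | ->] Hu; tauto. Qed.

Lemma bprod_Yr x : bprod x BY = x.
Proof. destruct x; reflexivity. Qed.

Lemma bprod_eq_Y x y : bprod x y = BY -> x = BY.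
Proof. destruct x, y; simpl; congruence. Qed.

Lemma bprod_eq_N x y : bprod x y = BN -> x = BN \/ y = BN.
Proof. destruct x, y; simpl; auto; discriminate. Qed.

Lemma holds_Some {S : StateSpace} (x s : S) : holds (Some x) s = true <-> sle x s.
Proof.
  simpl; destruct (excluded_middle_informative (sle x s)); split; congruence || tauto.
Qed.

Lemma sjoin_exists {S : StateSpace} (x y : S) :
  (exists u, sle x u /\ sle y u) ->
  exists c : S, forall s, sle c s <-> sle x s /\ sle y s.
Proof.
  intros Hub.
  destruct (sinf_exists S (fun u => sle x u /\ sle y u) Hub) as [c [_ [Hlow Hgreat]]].
  exists c; intros s; split.
  - intros Hcs.
    assert (Hxc : sle x c) by (apply Hgreat; [exact I | intros u [Hxu _]; exact Hxu]).
    assert (Hyc : sle y c) by (apply Hgreat; [exact I | intros u [_ Hyu]; exact Hyu]).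
    split; eapply sle_trans; eauto.
  - intros Hs; apply Hlow, Hs.
Qed.

(* Two states without a common upper bound meet in the absent bound [None]. *)
Lemma holds_meet {S : StateSpace} (o1 o2 : option S) :
  exists o : option S, forall s, holds o s = (holds o1 s && holds o2 s)%bool.
Proof.
  destruct o1 as [x|]; [| exists None; reflexivity].
  destruct o2 as [y|]; [| exists None; intros s; destruct (holds (Some x) s); reflexivity].
  destruct (classic (exists u, sle x u /\ sle y u)) as [Hub | Hnub].
  - destruct (sjoin_exists x y Hub) as [c Hc].
    exists (Some c); intros s.
    apply Bool.eq_true_iff_eq.
    rewrite Bool.andb_true_iff, !holds_Some; apply Hc.
  - exists None; intros s; simpl holds at 1.
    symmetry; apply Bool.not_true_iff_false.
    rewrite Bool.andb_true_iff, !holds_Some; eauto.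
Qed.

Lemma valid_eff_iff {S : StateSpace} (e : Eff S) :
  valid_eff e <-> forall s, ~ (holds (fst e) s = true /\ holds (snd e) s = true).
Proof.
  split.
  - intros Hv s [H1 H2].
    destruct e as [[a|] [b|]]; cbn [fst snd] in H1, H2; try discriminate.
    apply holds_Some in H1; apply holds_Some in H2.
    eapply Hv; eauto.
  - intros Hv a b -> [c [Hac Hbc]].
    apply (Hv c); cbn [fst snd]; rewrite !holds_Some; auto.
Qed.

Lemma ev_effY {S : StateSpace} (s : S) : ev (effY S) s = BY.
Proof.
  unfold ev; simpl fst.
  replace (holds (Some sbot) s) with true; [reflexivity|].
  symmetry; apply holds_Some, sbot_least.
Qed.

Lemma ev_effBot {S : StateSpace} (s : S) : ev (effBot S) s = Bbot.
Proof. reflexivity. Qed.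

Lemma eff_meet_exists {S : StateSpace} (e1 e2 : Eff S) :
  valid_eff e1 -> valid_eff e2 ->
  exists m, valid_eff m /\ forall s, ev m s = bmeet (ev e1 s) (ev e2 s).
Proof.
  destruct e1 as [a b], e2 as [a' b']; rewrite !valid_eff_iff; simpl.
  intros V V'.
  destruct (holds_meet a a') as [ya Hya], (holds_meet b b') as [yb Hyb].
  exists (ya, yb); split.
  - apply valid_eff_iff; intros s; simpl; rewrite Hya, Hyb.
    specialize (V s).
    destruct (holds a s), (holds a' s), (holds b s), (holds b' s); simpl; intuition.
  - intros s; unfold ev; simpl; rewrite Hya, Hyb.
    specialize (V s); specialize (V' s).
    destruct (holds a s), (holds a' s), (holds b s), (holds b' s); simpl; intuition.
Qed.

Lemma chu_meet {S : StateSpace} (C : Chu S) (e1 e2 : Eff S) :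
  eff C e1 -> eff C e2 ->
  exists m, eff C m /\ forall s, ev m s = bmeet (ev e1 s) (ev e2 s).
Proof.
  intros H1 H2.
  destruct (eff_meet_exists e1 e2 (eff_valid _ C _ H1) (eff_valid _ C _ H2))
    as [m [Vm Hm]].
  exists m; split; [| exact Hm].
  apply (chu_ii S C (fun e => e = e1 \/ e = e2)).
  - intros e [-> | ->]; assumption.
  - exists e1; left; reflexivity.
  - split; [exact Vm | split].
    + intros e [-> | ->] s; rewrite Hm; [apply ble_bmeet_l | apply ble_bmeet_r].
    + intros e _ He s; rewrite Hm.
      apply bmeet_greatest; apply He; auto.
Qed.

Lemma chu_disjoint_not_both_N {S : StateSpace} (C : Chu S) (e1 e2 : Eff S) (s : S) :
  eff C e1 -> eff C e2 ->
  is_inf_in (eff C) effle (fun e => e = e1 \/ e = e2) (effBot S) ->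
  ~ (ev e1 s = BN /\ ev e2 s = BN).
Proof.
  intros H1 H2 [_ [_ Hgreat]] [E1 E2].
  destruct (chu_meet C e1 e2 H1 H2) as [m [Hm Hev]].
  assert (Hbot : effle m (effBot S)).
  { apply Hgreat; [exact Hm |].
    intros e [-> | ->] t; rewrite Hev; [apply ble_bmeet_l | apply ble_bmeet_r]. }
  specialize (Hbot s); rewrite Hev, E1, E2, ev_effBot in Hbot.
  destruct Hbot; discriminate.
Qed.

Section MinTensor.

Context {SA SB : StateSpace} {CA : Chu SA} {CB : Chu SB}.
Context {Phi : Eff SA -> Eff SB -> B3} {P : SA -> SB -> Prop}.

Hypothesis Phi_inf : forall la lb, eff CA la -> eff CB lb ->
  is_inf_in (fun _ => True) ble
    (fun v => exists sa sb, P sa sb /\ v = bprod (ev la sa) (ev lb sb))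
    (Phi la lb).

Lemma Phi_nbot_attained la lb sa sb :
  eff CA la -> eff CB lb -> Phi la lb <> Bbot -> P sa sb ->
  bprod (ev la sa) (ev lb sb) = Phi la lb.
Proof.
  intros Hla Hlb Hnbot HP.
  destruct (Phi_inf la lb Hla Hlb) as [_ [Hlow _]].
  symmetry; apply ble_nbot_eq; [apply Hlow; eauto | exact Hnbot].
Qed.

Lemma Phi_ge_const la lb v :
  eff CA la -> eff CB lb ->
  (forall sa sb, P sa sb -> bprod (ev la sa) (ev lb sb) = v) -> ble v (Phi la lb).
Proof.
  intros Hla Hlb Hconst.
  destruct (Phi_inf la lb Hla Hlb) as [_ [_ Hgreat]].
  apply Hgreat; [exact I |].
  intros x [sa [sb [HP ->]]]; rewrite (Hconst sa sb HP); right; reflexivity.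
Qed.

Lemma Phi_Y_bot_nconst la v :
  eff CA la -> Phi la (effY SB) = Bbot -> v <> Bbot ->
  ~ (forall sa sb, P sa sb -> ev la sa = v).
Proof.
  intros Hla HY Hv Hconst.
  assert (Hle : ble v (Phi la (effY SB))).
  { apply (Phi_ge_const la (effY SB) v Hla (proj1 (chu_iv SB CB))).
    intros sa sb HP; rewrite ev_effY, bprod_Yr; exact (Hconst sa sb HP). }
  rewrite HY in Hle; destruct Hle; auto.
Qed.

Lemma Phi_neq_Y la lb :
  eff CA la -> eff CB lb -> Phi la (effY SB) = Bbot -> Phi la lb <> BY.
Proof.
  intros Hla Hlb HY HYlb.
  apply (Phi_Y_bot_nconst la BY Hla HY); [discriminate |].
  intros sa sb HP; apply (bprod_eq_Y _ (ev lb sb)).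
  rewrite (Phi_nbot_attained la lb sa sb); congruence.
Qed.

Lemma Phi_not_both_N la lb lb' :
  eff CA la -> eff CB lb -> eff CB lb' -> Phi la (effY SB) = Bbot ->
  is_inf_in (eff CB) effle (fun e => e = lb \/ e = lb') (effBot SB) ->
  ~ (Phi la lb = BN /\ Phi la lb' = BN).
Proof.
  intros Hla Hlb Hlb' HY Hdisj [E E'].
  apply (Phi_Y_bot_nconst la BN Hla HY); [discriminate |].
  intros sa sb HP.
  assert (Hprod : bprod (ev la sa) (ev lb sb) = BN)
    by (rewrite (Phi_nbot_attained la lb sa sb); congruence).
  assert (Hprod' : bprod (ev la sa) (ev lb' sb) = BN)
    by (rewrite (Phi_nbot_attained la lb' sa sb); congruence).
  destruct (bprod_eq_N _ _ Hprod) as [| HN]; [assumption |].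
  destruct (bprod_eq_N _ _ Hprod') as [| HN']; [assumption |].
  exfalso; exact (chu_disjoint_not_both_N CB lb lb' sb Hlb Hlb' Hdisj (conj HN HN')).
Qed.

End MinTensor.

Theorem mainTheorem20 (SA SB : StateSpace) (CA : Chu SA) (CB : Chu SB)
  (Phi : Eff SA -> Eff SB -> B3) (la : Eff SA) :
  in_min_tensor CA CB Phi -> eff CA la ->
  Phi la (effY SB) = Bbot ->
  forall lb lb' : Eff SB, eff CB lb -> eff CB lb' ->
    is_inf_in (eff CB) effle (fun e => e = lb \/ e = lb') (effBot SB) ->
    (Phi la lb = Bbot /\ Phi la lb' = BN) \/
    (Phi la lb = BN /\ Phi la lb' = Bbot) \/
    (Phi la lb = Bbot /\ Phi la lb' = Bbot).
Proof.
  intros [P [_ Phi_inf]] Hla HY lb lb' Hlb Hlb' Hdisj.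
  pose proof (Phi_neq_Y Phi_inf la lb Hla Hlb HY) as NY.
  pose proof (Phi_neq_Y Phi_inf la lb' Hla Hlb' HY) as NY'.
  pose proof (Phi_not_both_N Phi_inf la lb lb' Hla Hlb Hlb' HY Hdisj) as NNN.
  destruct (Phi la lb), (Phi la lb'); tauto.
Qed.
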